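(* Consider a single flow on a route of $n$ links $\mathcal{T}_0,\dots,\mathcal{T}_{n-1}$ (a line network) under the $\phi$-hop interference model, $0\le\phi\le n-1$. The Ordered Round-Robin policy $ORR$ is deadline-optimal among all admissible cyclic policies, its maximum packet delay is \[ \tau^*(ORR)=n+\phi, \] and its activation rates are $\bar{\mu}^{ORR}_e=\frac{1}{\phi+1}$ for every link $e$ of the route.
   Context: Time is slotted. Under $\phi$-hop interference on the line, distinct links $\mathcal{T}_j,\mathcal{T}_{j'}$ cannot be active in the same slot if $|j-j'|\le\phi$. Each link $\mathcal{T}_j$ has a slice of width $w_j$ for the flow, with a FCFS queue; the flow has deterministic fluid arrival rate $\lambda>0$ per slot at the source. Units arriving in slot $t$ are available for service at the first link from slot $t+1$; an activated link serves $\min\{Q,w_j\}$ from its queue of size $Q$, and units served at a link in slot $t$ are available at the next link from slot $t+1$; a packet's delay is $t_d-t_a$, where $t_a$ is its arrival slot and $t_d$ the slot in which it is served at the last link. Policies are admissible (respect interference, work-conserving) and cyclic: $\mu^\pi(t)=\mu^\pi(t+K^\pi)$ for all $t\ge0$; $\bar{\mu}^\pi_e=\frac1{K^\pi}\sum_{t=0}^{K^\pi-1}\mu^\pi_e(t)$. For a policy $\pi$, $\tau^*(\pi,\boldsymbol{w},\lambda)$ is the maximum delay seen by any packet (equivalently the minimum deadline met by all packets) and $\tau^*(\pi)=\lim_{\lambda\to 0}\tau^*(\pi,\boldsymbol{w},\lambda)$. A cyclic admissible policy $\pi$ is deadline-optimal if $\tau^*(\pi)\le\tau^*(\pi')$ for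 all cyclic admissible $\pi'$. The $ORR$ policy has period $\phi+1$: in slot $t$ it activates every link $\mathcal{T}_j$ with $j\equiv t \pmod{\phi+1}$. *)

From Stdlib Require Import Reals Lra Lia.
Open Scope R_scope.

(* Links of the route are T_0, ..., T_{n-1}, indexed by nat j < n.
   A (cyclic) policy is an open-loop activation schedule [act t j]
   ("link j is activated in slot t") together with its period K. *)
Record policy := mkPolicy { period : nat ; act : nat -> nat -> bool }.

Definition cyclic (n : nat) (p : policy) : Prop :=
  (0 < period p)%nat /\
  forall t j, (j < n)%nat -> act p (t + period p) j = act p t j.

Definition respects_interference (n phi : nat) (p : policy) : Prop :=
  forall t j j', (j < j')%nat -> (j' < n)%nat ->
    act p t j = true -> act p t j' = true -> (phi < j' - j)%nat.

(* Admissible: respects interference; work conservation is built into the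
   service rule [serv] below (an activated link serves min{Q, w_j}). *)
Definition admissible (n phi : nat) (p : policy) : Prop :=
  respects_interference n phi p.

Definition serv (p : policy) (w : nat -> R) (t : nat) (q : nat -> R) (j : nat) : R :=
  if act p t j then Rmin (q j) (w j) else 0.

(* Fluid arriving in slot t at the source is available at link 0 from slot
   t+1; fluid served by link j in slot t is available at link j+1 from t+1. *)
Fixpoint queue (p : policy) (w : nat -> R) (lam : R) (t : nat) : nat -> R :=
  match t with
  | O => fun _ => 0
  | S t' =>
      let q := queue p w lam t' in
      fun j => q j - serv p w t' q j +
               match j with O => lam | S j' => serv p w t' q j' end
  end.

Definition cum_dep (n : nat) (p : policy) (w : nat -> R) (lam : R) (t : nat) : R :=
  sum_f_R0 (fun s => serv p w s (queue p w lam s) (n - 1)) t.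

(* Fluid unit x (x > 0, FCFS order index) arrives in slot t. *)
Definition arrives_in (lam x : R) (t : nat) : Prop :=
  INR t * lam < x <= INR (t + 1) * lam.

Definition departs_in (n : nat) (p : policy) (w : nat -> R) (lam x : R) (t : nat) : Prop :=
  x <= cum_dep n p w lam t /\ forall s, (s < t)%nat -> cum_dep n p w lam s < x.

Definition deadline_met (n : nat) (p : policy) (w : nat -> R) (lam : R) (d : nat) : Prop :=
  forall x ta, 0 < x -> arrives_in lam x ta ->
    exists td, departs_in n p w lam x td /\ (td - ta <= d)%nat.

(* tau*(pi, w, lam) = D, with None standing for +infinity:
   the minimum deadline met by all packets. *)
Definition max_delay (n : nat) (p : policy) (w : nat -> R) (lam : R) (D : option nat) : Prop :=
  match D with
  | Some d => deadline_met n p w lam d /\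
              forall d', deadline_met n p w lam d' -> (d <= d')%nat
  | None => forall d, ~ deadline_met n p w lam d
  end.

(* tau*(pi) = lim_{lam -> 0+} tau*(pi, w, lam) = L  (None = +infinity). *)
Definition tau_star_is (n : nat) (p : policy) (w : nat -> R) (L : option nat) : Prop :=
  match L with
  | Some d => exists delta, 0 < delta /\
      forall lam, 0 < lam < delta -> max_delay n p w lam (Some d)
  | None => forall M : nat, exists delta, 0 < delta /\
      forall lam, 0 < lam < delta -> ~ deadline_met n p w lam M
  end.

Definition le_ext (a b : option nat) : Prop :=
  match a, b with
  | Some x, Some y => (x <= y)%nat
  | _, None => True
  | None, Some _ => False
  end.

Definition deadline_optimal (n phi : nat) (w : nat -> R) (p : policy) : Prop :=
  admissible n phi p /\ cyclic n p /\
  forall p' L L', admissible n phi p' -> cyclic n p' ->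
    tau_star_is n p w L -> tau_star_is n p' w L' -> le_ext L L'.

Definition rate (p : policy) (e : nat) : R :=
  / INR (period p) *
  sum_f_R0 (fun t => if act p t e then 1 else 0) (period p - 1).

Definition ORR (phi : nat) : policy :=
  mkPolicy (S phi) (fun t j => Nat.eqb (j mod S phi) (t mod S phi)).

From Stdlib Require Import Reals Lra Lia Arith List Classical.
Import ListNotations.
Open Scope R_scope.

(* Write K = phi + 1.  Once K * lam <= w j on every link, each ORR
   activation empties its queue, so the fluid that arrived during one period travels
   as a batch, one link per slot: link n-1 forwards the m-th batch in slot m K + n - 1,
   and a unit arriving in slot t_a has left by slot t_a + n + phi.

   Links 0..phi pairwise interfere,
   so at most one of them is active in each slot.  Cyclicity yields a staircase
   r_0 < r_1 < ... < r_phi, link j being active at r_j and idle strictly between r_j and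
   r_(j+1).  The last unit arriving in slot r_0 leaves only after activations
   b_0 < ... < b_(n-1) of links 0..n-1 after r_0, and b_j > r_(j+1) for j < phi.  Hence
   the window (r_0, b_phi] contains the 2 phi + 1 distinct busy slots
   b_0, r_1, b_1, ..., r_phi, b_phi, and links phi+1..n-1 add one slot each: that unit
   is delayed by at least n + phi slots. *)

Fixpoint served (p : policy) (w : nat -> R) (lam : R) (j s : nat) : R :=
  match s with
  | O => 0
  | S s' => served p w lam j s' + serv p w s' (queue p w lam s') j
  end.

Fixpoint relay (p : policy) (j a e : nat) : Prop :=
  match j with
  | O => exists b, (a < b < e)%nat /\ act p b 0 = true
  | S j' => exists b, (b < e)%nat /\ act p b (S j') = true /\ relay p j' a b
  end.

Section Fluid.
Variables (p : policy) (w : nat -> R) (lam : R).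

Lemma served_S j s :
  served p w lam j (S s) = served p w lam j s + serv p w s (queue p w lam s) j.
Proof. reflexivity. Qed.

Lemma queue_source s : queue p w lam s 0 = lam * INR s - served p w lam 0 s.
Proof.
  induction s as [|s IH]; simpl; [ring|].
  rewrite IH. destruct s; simpl; ring.
Qed.

Lemma queue_succ s j :
  queue p w lam s (S j) = served p w lam j s - served p w lam (S j) s.
Proof. induction s as [|s IH]; simpl; [ring|]. rewrite IH. ring. Qed.

Lemma cum_dep_served n t : cum_dep n p w lam t = served p w lam (n - 1) (S t).
Proof.
  unfold cum_dep. induction t as [|t IH]; simpl; [ring|].
  rewrite IH. reflexivity.
Qed.

Lemma serv_idle t q j : act p t j = false -> serv p w t q j = 0.
Proof. intros H. unfold serv. rewrite H. reflexivity. Qed.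

Lemma serv_le_queue t q j : act p t j = true -> serv p w t q j <= q j.
Proof. intros H. unfold serv. rewrite H. apply Rmin_l. Qed.

Lemma serv_full t q j : act p t j = true -> q j <= w j -> serv p w t q j = q j.
Proof. intros H Hq. unfold serv. rewrite H. apply Rmin_left, Hq. Qed.

Lemma relay_mono j a e e' : relay p j a e -> (e <= e')%nat -> relay p j a e'.
Proof.
  destruct j as [|j]; intros [b Hb] He; exists b; simpl in *; intuition lia.
Qed.

Lemma relay_truncate k j a e :
  relay p (j + k) a e -> exists e', relay p j a e' /\ (e' + k <= e)%nat.
Proof.
  revert e. induction k as [|k IH]; intros e H.
  - exists e. rewrite Nat.add_0_r in H. split; [exact H | lia].
  - rewrite Nat.add_succ_r in H. destruct H as [b [Hb [_ H]]].
    destruct (IH b H) as [e' [H' He']]. exists e'. split; [exact H' | lia].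
Qed.

Lemma relay_activates j a e i :
  relay p j a e -> (i <= j)%nat -> exists b, act p b i = true.
Proof.
  revert e. induction j as [|j IH]; intros e H Hi.
  - destruct H as [b [_ Hb]]. exists b. replace i with 0%nat by lia. exact Hb.
  - destruct H as [b [_ [Hb H]]].
    destruct (Nat.eq_dec i (S j)) as [-> | Hne]; [exists b; exact Hb |].
    apply (IH b H). lia.
Qed.

(* Fluid that arrived in slots [0, a) amounts to [lam * a]; anything beyond it must
   have been carried by link 0 after slot a, then link 1, ..., then link j. *)
Lemma served_le_without_relay j a s :
  0 <= lam -> ~ relay p j a s -> served p w lam j s <= lam * INR a.
Proof.
  intros Hlam. revert s. induction j as [|j IHj]; induction s as [|s IHs]; intros Hno;
    try (apply Rmult_le_pos; [exact Hlam | apply pos_INR]); rewrite served_S.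
  - destruct (act p s 0) eqn:Ha; [| rewrite serv_idle, Rplus_0_r by exact Ha;
      apply IHs; contradict Hno; apply (relay_mono _ _ _ _ Hno); lia].
    assert (Hs : (s <= a)%nat).
    { apply Nat.nlt_ge. intro Has. apply Hno. exists s. split; [lia | exact Ha]. }
    pose proof (serv_le_queue s (queue p w lam s) 0 Ha) as Hq.
    rewrite queue_source in Hq.
    assert (lam * INR s <= lam * INR a) by (apply Rmult_le_compat_l, le_INR; assumption).
    lra.
  - destruct (act p s (S j)) eqn:Ha; [| rewrite serv_idle, Rplus_0_r by exact Ha;
      apply IHs; contradict Hno; apply (relay_mono _ _ _ _ Hno); lia].
    assert (Hprev : served p w lam j s <= lam * INR a).
    { apply IHj. intro H. apply Hno. exists s. split; [lia | split; assumption]. }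
    pose proof (serv_le_queue s (queue p w lam s) (S j) Ha) as Hq.
    rewrite queue_succ in Hq. lra.
Qed.

End Fluid.

Open Scope nat_scope.

Definition staircase (p : policy) (phi : nat) (r : nat -> nat) : Prop :=
  (forall j, j <= phi -> act p (r j) j = true) /\
  (forall j, j < phi -> r j < r (S j)) /\
  (forall j y, j < phi -> r j < y < r (S j) -> act p y j = false).

Section Staircase.
Variables (p : policy) (n phi : nat).
Hypothesis Hphi : phi < n.
Hypothesis Hint : respects_interference n phi p.

Lemma act_exclusive t i k :
  i <= phi -> k <= phi -> act p t i = true -> act p t k = true -> i = k.
Proof.
  intros Hi Hk Ai Ak.
  destruct (Nat.lt_trichotomy i k) as [h | [h | h]]; [| exact h |].
  - pose proof (Hint t i k h ltac:(lia) Ai Ak). lia.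
  - pose proof (Hint t k i h ltac:(lia) Ak Ai). lia.
Qed.

Variable r : nat -> nat.
Hypothesis Hr : staircase p phi r.

Lemma stair_pass j b : j < phi -> r j < b -> act p b j = true -> r (S j) < b.
Proof.
  destruct Hr as [r_act [_ r_gap]]. intros Hj Hb Ab.
  destruct (lt_eq_lt_dec b (r (S j))) as [[h | h] | h]; [| subst b | exact h].
  - rewrite (r_gap j b Hj ltac:(lia)) in Ab. discriminate.
  - pose proof (act_exclusive _ j (S j) ltac:(lia) ltac:(lia) Ab (r_act (S j) Hj)). lia.
Qed.

Lemma stair_increasing j : j < phi -> r 0 < r (S j).
Proof.
  destruct Hr as [_ [r_lt _]].
  induction j as [|j IH]; intros Hj; [exact (r_lt 0 Hj) |].
  pose proof (r_lt (S j) Hj). pose proof (IH ltac:(lia)). lia.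
Qed.

(* Along a relay leaving after [r 0], link [j] acts after [r (S j)], so each link
   [1 <= j <= phi] is busy twice in the window (at [r j] and on the relay) and link 0
   once; the links [0..phi] exclude one another, so these are distinct slots. *)
Lemma relay_busy_slots j e : j <= phi -> relay p j (r 0) e ->
  exists b, b < e /\ act p b j = true /\ r j < b /\
  exists L, length L = 2 * j + 1 /\ NoDup L /\
    forall s, In s L -> r 0 < s <= b /\ exists i, i <= j /\ act p s i = true.
Proof.
  destruct Hr as [r_act _].
  revert e. induction j as [|j IH]; intros e Hj H.
  - destruct H as [b [Hb Ab]]. exists b. split; [lia | split; [exact Ab | split; [lia |]]].
    exists [b]. split; [reflexivity | split; [repeat constructor; simpl; tauto |]].
    intros s [<- | []]. split; [lia | exists 0; split; [lia | exact Ab]].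
  - destruct H as [b [Hb [Ab H]]].
    destruct (IH b ltac:(lia) H) as [b' [Hb' [Ab' [Hrb' [L [HL [Hnd Hin]]]]]]].
    pose proof (stair_pass j b' ltac:(lia) Hrb' Ab') as Hpass.
    pose proof (stair_increasing j ltac:(lia)).
    exists b. split; [exact Hb | split; [exact Ab | split; [lia |]]].
    exists (r (S j) :: b :: L). split; [simpl; rewrite HL; lia |]. split.
    + constructor; [| constructor; [| exact Hnd]].
      * intros [Hrb | Hin']; [lia |].
        destruct (Hin _ Hin') as [_ [i [Hi Ai]]].
        pose proof (act_exclusive _ i (S j) ltac:(lia) ltac:(lia) Ai (r_act (S j) Hj)). lia.
      * intros Hin'. destruct (Hin _ Hin'). lia.
    + intros s [<- | [<- | Hs]].
      * split; [lia | exists (S j); split; [lia | exact (r_act (S j) Hj)]].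
      * split; [lia | exists (S j); split; [lia | exact Ab]].
      * destruct (Hin s Hs) as [Hs' [i [Hi Ai]]].
        split; [lia | exists i; split; [lia | exact Ai]].
Qed.

Lemma relay_crosses_stair e : relay p phi (r 0) e -> r 0 + 2 * phi + 1 < e.
Proof.
  intros H. destruct (relay_busy_slots phi e (le_n _) H)
    as [b [Hb [_ [_ [L [HL [Hnd Hin]]]]]]].
  assert (Hincl : incl L (seq (S (r 0)) (b - r 0))).
  { intros s Hs. apply in_seq. destruct (Hin s Hs). lia. }
  pose proof (NoDup_incl_length Hnd Hincl). rewrite length_seq in *. lia.
Qed.

End Staircase.

Fixpoint last_act (p : policy) (i b : nat) : nat :=
  match b with
  | O => 0
  | S b' => if act p b' i then b' else last_act p i b'
  end.

Lemma last_act_spec p i b y : y < b -> act p y i = true ->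
  y <= last_act p i b < b /\ act p (last_act p i b) i = true /\
  forall z, last_act p i b < z < b -> act p z i = false.
Proof.
  induction b as [|b IH]; intros Hy Ay; [lia |]. simpl.
  destruct (act p b i) eqn:Ab.
  - split; [lia | split; [exact Ab | intros; lia]].
  - assert (Hyb : y < b) by (destruct (Nat.eq_dec y b); [subst; congruence | lia]).
    destruct (IH Hyb Ay) as [H1 [H2 H3]].
    split; [lia | split; [exact H2 |]].
    intros z Hz. destruct (Nat.eq_dec z b) as [-> | Hne]; [exact Ab | apply H3; lia].
Qed.

Section Cyclic.
Variables (p : policy) (n : nat).
Hypothesis Hcyc : cyclic n p.

Lemma act_shift t m i : i < n -> act p (t + m * period p) i = act p t i.
Proof.
  destruct Hcyc as [_ Hc]. intros Hi. induction m as [|m IH].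
  - rewrite Nat.add_0_r. reflexivity.
  - replace (t + S m * period p) with (t + m * period p + period p) by lia.
    rewrite Hc by exact Hi. exact IH.
Qed.

Lemma act_mod t i : i < n -> act p (t mod period p) i = act p t i.
Proof.
  intros Hi. rewrite (Nat.div_mod_eq t (period p)) at 2.
  rewrite Nat.add_comm, Nat.mul_comm. symmetry. apply act_shift, Hi.
Qed.

(* [descend u j (phi - j)] is r_j, where r_phi = u and r_j is the last activation
   of link [j] before r_(j+1). *)
Fixpoint descend (u j d : nat) : nat :=
  match d with
  | O => u
  | S d' => last_act p j (descend u (S j) d')
  end.

Variables (phi u : nat).
Hypothesis Hphi : phi < n.
Hypothesis Hearly : forall i, i <= phi -> exists c, c < period p /\ act p c i = true.
Hypothesis Hu : phi * period p <= u /\ act p u phi = true.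

Let r j := descend u j (phi - j).

Lemma descend_step j : j < phi -> r j = last_act p j (r (S j)).
Proof.
  intros Hj. unfold r. replace (phi - j) with (S (phi - S j)) by lia. reflexivity.
Qed.

Lemma act_in_period j b : j <= phi -> S j * period p <= b ->
  exists y, j * period p <= y < b /\ act p y j = true.
Proof.
  intros Hj Hb. destruct (Hearly j Hj) as [c [Hc Ac]].
  exists (c + j * period p). split; [simpl in Hb; lia |].
  rewrite act_shift; [exact Ac | lia].
Qed.

Lemma descend_late d j : j + d = phi -> j * period p <= r j /\ act p (r j) j = true.
Proof.
  revert j. induction d as [|d IH]; intros j Hj.
  - replace j with phi by lia. unfold r. rewrite Nat.sub_diag. exact Hu.
  - destruct (IH (S j) ltac:(lia)) as [Hlate _].
    destruct (act_in_period j (r (S j)) ltac:(lia) Hlate) as [y [Hy Ay]].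
    rewrite descend_step by lia.
    destruct (last_act_spec p j (r (S j)) y ltac:(lia) Ay) as [H1 [H2 _]].
    split; [lia | exact H2].
Qed.

Lemma descend_staircase : staircase p phi r.
Proof.
  assert (Hgap : forall j, j < phi -> r j < r (S j) /\
            forall z, r j < z < r (S j) -> act p z j = false).
  { intros j Hj. destruct (descend_late (phi - S j) (S j) ltac:(lia)) as [Hlate _].
    destruct (act_in_period j (r (S j)) ltac:(lia) Hlate) as [y [Hy Ay]].
    rewrite descend_step by exact Hj.
    destruct (last_act_spec p j (r (S j)) y ltac:(lia) Ay) as [H1 [_ H3]].
    split; [lia | exact H3]. }
  split; [| split].
  - intros j Hj. apply (descend_late (phi - j)). lia.
  - intros j Hj. apply Hgap, Hj.
  - intros j z Hj. apply Hgap, Hj.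
Qed.

End Cyclic.

Lemma staircase_exists p n phi : cyclic n p -> phi < n ->
  (forall i, i <= phi -> exists c, act p c i = true) -> exists r, staircase p phi r.
Proof.
  intros Hcyc Hphi Hall.
  assert (HK : period p <> 0) by (destruct Hcyc; lia).
  assert (Hearly : forall i, i <= phi -> exists c, c < period p /\ act p c i = true).
  { intros i Hi. destruct (Hall i Hi) as [c Ac]. exists (c mod period p).
    split; [apply Nat.mod_upper_bound, HK | rewrite (act_mod p n); [exact Ac | exact Hcyc | lia]]. }
  destruct (Hearly phi (le_n _)) as [c [_ Ac]].
  exists (fun j => descend p (c + phi * period p) j (phi - j)).
  apply (descend_staircase p n Hcyc); [exact Hphi | exact Hearly |].
  split; [lia | rewrite (act_shift p n); [exact Ac | exact Hcyc | exact Hphi]].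
Qed.

Lemma relay_slow p n phi : 0 < n -> phi <= n - 1 ->
  admissible n phi p -> cyclic n p ->
  exists a, forall e, relay p (n - 1) a e -> a + n + phi < e.
Proof.
  intros Hn Hphi Hint Hcyc.
  assert (Hsuffices : forall a, (forall e, relay p phi a e -> a + 2 * phi + 1 < e) ->
            forall e, relay p (n - 1) a e -> a + n + phi < e).
  { intros a Ha e H. replace (n - 1) with (phi + (n - 1 - phi)) in H by lia.
    destruct (relay_truncate p _ _ _ _ H) as [e' [H' He']].
    pose proof (Ha e' H'). lia. }
  destruct (classic (forall i, i <= phi -> exists c, act p c i = true)) as [Hall | Hnone].
  - destruct (staircase_exists p n phi Hcyc ltac:(lia) Hall) as [r Hr].
    exists (r 0). apply Hsuffices. apply (relay_crosses_stair p n phi); assumption || lia.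
  - exists 0. apply Hsuffices. intros e H. exfalso. apply Hnone.
    intros i Hi. exact (relay_activates p phi 0 e i H Hi).
Qed.

Lemma div_succ_cases K m : 0 < K ->
  S m / K = m / K /\ S m mod K <> 0 \/ S m / K = S (m / K) /\ S m mod K = 0.
Proof.
  intros HK. pose proof (Nat.div_mod_eq m K) as Hm.
  pose proof (Nat.mod_upper_bound m K ltac:(lia)) as Hr.
  destruct (Nat.eq_dec (S (m mod K)) K) as [Heq | Hne].
  - right. split.
    + symmetry. apply (Nat.div_unique _ _ _ 0); lia.
    + symmetry. apply (Nat.mod_unique _ _ (S (m / K))); lia.
  - left. split.
    + symmetry. apply (Nat.div_unique _ _ _ (S (m mod K))); lia.
    + rewrite <- (Nat.mod_unique (S m) K (m / K) (S (m mod K))); lia.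
Qed.

Lemma div_sub_succ_le K t j : 0 < K -> (S t - j) / K <= S ((t - j) / K).
Proof.
  intros HK. replace (t - j) with (pred (S t - j)) by lia.
  destruct (S t - j) as [|m]; simpl pred.
  - rewrite Nat.Div0.div_0_l. lia.
  - destruct (div_succ_cases K m HK) as [[-> _] | [-> _]]; lia.
Qed.

Lemma div_sub_succ K t j : 0 < K -> S t mod K <> j mod K -> (S t - j) / K = (t - j) / K.
Proof.
  intros HK Hne. destruct (le_lt_dec j t) as [Hjt | Htj].
  - rewrite Nat.sub_succ_l by exact Hjt.
    destruct (div_succ_cases K (t - j) HK) as [[-> _] | [_ H0]]; [reflexivity |].
    exfalso. apply Hne. apply Nat.Div0.div_exact in H0.
    replace (S t) with (j + (S (t - j) / K) * K) by lia. apply Nat.Div0.mod_add.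
  - destruct (Nat.eq_dec (S t) j) as [<- | Hne']; [congruence |].
    replace (S t - j) with 0 by lia. replace (t - j) with 0 by lia. reflexivity.
Qed.

Lemma act_ORR phi t j : act (ORR phi) t j = Nat.eqb (j mod S phi) (t mod S phi).
Proof. reflexivity. Qed.

Lemma ORR_admissible n phi : admissible n phi (ORR phi).
Proof.
  intros t j j' Hjj' _ Aj Aj'. rewrite act_ORR in Aj, Aj'.
  apply Nat.eqb_eq in Aj, Aj'.
  pose proof (Nat.div_mod_eq j (S phi)). pose proof (Nat.div_mod_eq j' (S phi)).
  assert (Hq : j / S phi < j' / S phi) by nia.
  nia.
Qed.

Lemma ORR_cyclic n phi : cyclic n (ORR phi).
Proof.
  split; [simpl; lia |]. intros t j _. rewrite !act_ORR. simpl period.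
  rewrite <- (Nat.mul_1_l (S phi)) at 2. rewrite Nat.Div0.mod_add. reflexivity.
Qed.

Open Scope R_scope.

Lemma deadline_lower_bound n phi p w lam d : (0 < n)%nat -> (phi <= n - 1)%nat ->
  admissible n phi p -> cyclic n p -> 0 < lam ->
  deadline_met n p w lam d -> (n + phi <= d)%nat.
Proof.
  intros Hn Hphi Hint Hcyc Hlam Hmet.
  destruct (relay_slow p n phi Hn Hphi Hint Hcyc) as [a Ha].
  assert (Harr : arrives_in lam (INR (a + 1) * lam) a).
  { unfold arrives_in. rewrite plus_INR. simpl INR. lra. }
  assert (Hx : 0 < INR (a + 1) * lam) by (apply Rmult_lt_0_compat; [apply lt_0_INR; lia | exact Hlam]).
  destruct (Hmet _ _ Hx Harr) as [td [[Hdep _] Hdelay]].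
  rewrite cum_dep_served in Hdep.
  destruct (classic (relay p (n - 1) a (S td))) as [H | H].
  - pose proof (Ha _ H). lia.
  - pose proof (served_le_without_relay p w lam (n - 1) a (S td) ltac:(lra) H).
    rewrite plus_INR in Hdep. simpl INR in Hdep. lra.
Qed.

Section ORR_dynamics.
Variables (n phi : nat) (w : nat -> R) (lam : R).
Let K := S phi.
Hypothesis Hlam : 0 <= lam.
Hypothesis Hw : forall j, (j < n)%nat -> INR K * lam <= w j.

(* For [K * lam <= w j] every activation flushes the whole queue, so link [j]
   forwards one batch of [K * lam] (the arrivals of one period) every [K] slots,
   the first one in slot [K + j]. *)
Lemma served_ORR t j : (j < n)%nat ->
  served (ORR phi) w lam j (S t) = INR K * lam * INR ((t - j) / K).
Proof.
  assert (HK : (0 < K)%nat) by (unfold K; lia).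
  revert j. induction t as [|t IH]; intros j Hj.
  - rewrite served_S, Nat.sub_0_l, Nat.Div0.div_0_l, INR_0. cbn [served queue]. unfold serv.
    destruct (act _ _ _); [rewrite Rmin_left by (pose proof (Hw j Hj); pose proof (pos_INR K); nra) |];
      ring.
  - rewrite served_S, IH by exact Hj.
    destruct (act (ORR phi) (S t) j) eqn:Ha.
    + assert (Hq : queue (ORR phi) w lam (S t) j =
                   INR K * lam * (INR ((S t - j) / K) - INR ((t - j) / K))).
      { rewrite act_ORR in Ha. apply Nat.eqb_eq in Ha. fold K in Ha.
        destruct j as [|j].
        - rewrite queue_source, IH, !Nat.sub_0_r by exact Hj.
          rewrite Nat.Div0.mod_0_l in Ha. symmetry in Ha. apply Nat.Div0.div_exact in Ha.
          rewrite Ha at 1. rewrite mult_INR. ring.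
        - rewrite queue_succ, !IH, Nat.sub_succ by lia. ring. }
      assert (Hbatch : queue (ORR phi) w lam (S t) j <= INR K * lam).
      { pose proof (div_sub_succ_le K t j HK) as Hle. apply le_INR in Hle. rewrite S_INR in Hle.
        rewrite Hq. rewrite <- (Rmult_1_r (INR K * lam)) at 2.
        apply Rmult_le_compat_l; [apply Rmult_le_pos; [apply pos_INR | exact Hlam] | lra]. }
      rewrite serv_full, Hq; [ring | exact Ha | pose proof (Hw j Hj); lra].
    + rewrite serv_idle by exact Ha.
      rewrite act_ORR in Ha. apply Nat.eqb_neq in Ha.
      rewrite (div_sub_succ K t j HK) by (fold K in Ha; congruence). ring.
Qed.

Lemma cum_dep_ORR t : (0 < n)%nat ->
  cum_dep n (ORR phi) w lam t = INR K * lam * INR ((t - (n - 1)) / K).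
Proof. intros Hn. rewrite cum_dep_served. apply served_ORR. lia. Qed.

End ORR_dynamics.

Lemma first_crossing (f : nat -> R) x T : (exists s, (s <= T)%nat /\ x <= f s) ->
  exists t, (t <= T)%nat /\ x <= f t /\ forall s, (s < t)%nat -> f s < x.
Proof.
  induction T as [|T IH]; intros [s [Hs Hfs]].
  - exists 0%nat. split; [lia | split; [replace 0%nat with s by lia; exact Hfs | intros; lia]].
  - destruct (classic (exists s', (s' <= T)%nat /\ x <= f s')) as [Hearly | Hlate].
    + destruct (IH Hearly) as [t [Ht Hmin]]. exists t. split; [lia | exact Hmin].
    + exists (S T). split; [lia | split].
      * replace (S T) with s by (destruct (Nat.eq_dec s (S T)); [assumption |];
          exfalso; apply Hlate; exists s; split; [lia | exact Hfs]).
        exact Hfs.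
      * intros s' Hs'. apply Rnot_le_lt. intro H. apply Hlate. exists s'. split; [lia | exact H].
Qed.

Lemma ORR_deadline_met n phi w lam : (0 < n)%nat -> 0 < lam ->
  (forall j, (j < n)%nat -> INR (S phi) * lam <= w j) ->
  deadline_met n (ORR phi) w lam (n + phi).
Proof.
  intros Hn Hlam Hw x ta _ [_ Hx].
  set (K := S phi).
  assert (HK : (K <> 0)%nat) by (unfold K; lia).
  assert (Hcum : x <= cum_dep n (ORR phi) w lam (ta + (n - 1) + K)).
  { rewrite cum_dep_ORR by (lra || assumption). fold K.
    replace (ta + (n - 1) + K - (n - 1))%nat with (ta + 1 * K)%nat by lia.
    rewrite Nat.div_add by exact HK.
    assert (Hbatch : (ta + 1 <= K * (ta / K + 1))%nat).
    { pose proof (Nat.div_mod_eq ta K). pose proof (Nat.mod_upper_bound ta K HK). lia. }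
    apply le_INR in Hbatch. rewrite mult_INR in Hbatch.
    apply Rle_trans with (INR (ta + 1) * lam); [exact Hx |].
    replace (INR K * lam * INR (ta / K + 1)) with (INR K * INR (ta / K + 1) * lam) by ring.
    apply Rmult_le_compat_r; lra. }
  destruct (first_crossing _ _ _ (ex_intro _ _ (conj (le_n _) Hcum))) as [td [Htd Hdep]].
  exists td. split; [exact Hdep | unfold K in Htd; lia].
Qed.

Lemma pos_lower_bound n (w : nat -> R) : (forall j, (j < n)%nat -> 0 < w j) ->
  exists m, 0 < m /\ forall j, (j < n)%nat -> m <= w j.
Proof.
  induction n as [|n IH]; intros Hw.
  - exists 1. split; [lra | intros; lia].
  - destruct IH as [m [Hm Hmw]]; [intros j Hj; apply Hw; lia |].
    exists (Rmin m (w n)). split; [apply Rmin_pos; [exact Hm | apply Hw; lia] |].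
    intros j Hj. destruct (Nat.eq_dec j n) as [-> | Hne]; [apply Rmin_r |].
    apply Rle_trans with m; [apply Rmin_l | apply Hmw; lia].
Qed.

Lemma ORR_tau_star n phi w : (0 < n)%nat -> (phi <= n - 1)%nat ->
  (forall j, (j < n)%nat -> 0 < w j) ->
  tau_star_is n (ORR phi) w (Some (n + phi)%nat).
Proof.
  intros Hn Hphi Hw. destruct (pos_lower_bound n w Hw) as [m [Hm Hmw]].
  assert (HK : 0 < INR (S phi)) by (apply lt_0_INR; lia).
  exists (m / INR (S phi)). split; [apply Rdiv_lt_0_compat; assumption |].
  intros lam [Hlam Hsmall]. split.
  - assert (Hbatch : INR (S phi) * lam < m).
    { replace m with (INR (S phi) * (m / INR (S phi))) by (field; lra).
      apply Rmult_lt_compat_l; assumption. }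
    apply ORR_deadline_met; [exact Hn | exact Hlam |].
    intros j Hj. pose proof (Hmw j Hj). lra.
  - intros d Hd. exact (deadline_lower_bound n phi _ w lam d Hn Hphi
      (ORR_admissible n phi) (ORR_cyclic n phi) Hlam Hd).
Qed.

Lemma exists_pos_below d1 d2 : 0 < d1 -> 0 < d2 -> exists lam, 0 < lam < d1 /\ lam < d2.
Proof.
  intros H1 H2. exists (Rmin d1 d2 / 2).
  pose proof (Rmin_l d1 d2). pose proof (Rmin_r d1 d2). pose proof (Rmin_pos d1 d2 H1 H2). lra.
Qed.

Lemma tau_star_unique n p w d L :
  tau_star_is n p w (Some d) -> tau_star_is n p w L -> L = Some d.
Proof.
  intros [d1 [Hd1 H1]] HL. destruct L as [d' |].
  - destruct HL as [d2 [Hd2 H2]].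
    destruct (exists_pos_below d1 d2 Hd1 Hd2) as [lam [Hlam1 Hlam2]].
    destruct (H1 lam Hlam1) as [Hmet Hmin]. destruct (H2 lam ltac:(lra)) as [Hmet' Hmin'].
    specialize (Hmin _ Hmet'). specialize (Hmin' _ Hmet). f_equal. lia.
  - destruct (HL d) as [d2 [Hd2 H2]].
    destruct (exists_pos_below d1 d2 Hd1 Hd2) as [lam [Hlam1 Hlam2]].
    exfalso. apply (H2 lam ltac:(lra)), (H1 lam Hlam1).
Qed.

Lemma tau_star_lower_bound n phi p w L : (0 < n)%nat -> (phi <= n - 1)%nat ->
  admissible n phi p -> cyclic n p -> tau_star_is n p w L -> le_ext (Some (n + phi)%nat) L.
Proof.
  intros Hn Hphi Hint Hcyc HL. destruct L as [d |]; [| exact I].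
  destruct HL as [delta [Hdelta H]]. simpl.
  destruct (H (delta / 2) ltac:(lra)) as [Hmet _].
  exact (deadline_lower_bound n phi p w (delta / 2) d Hn Hphi Hint Hcyc ltac:(lra) Hmet).
Qed.

Lemma sum_f_R0_indicator c m :
  sum_f_R0 (fun t => if Nat.eqb c t then 1 else 0) m = if Nat.leb c m then 1 else 0.
Proof.
  induction m as [|m IH]; simpl sum_f_R0.
  - destruct c; reflexivity.
  - rewrite IH. destruct (Nat.leb_spec c m); destruct (Nat.eqb_spec c (S m));
      destruct (Nat.leb_spec c (S m)); lia || lra.
Qed.

Lemma ORR_rate phi e : rate (ORR phi) e = 1 / INR (phi + 1).
Proof.
  unfold rate. simpl period. rewrite Nat.sub_succ, Nat.sub_0_r, Nat.add_1_r.
  rewrite (sum_eq _ (fun t => if Nat.eqb (e mod S phi) t then 1 else 0)).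
  - rewrite sum_f_R0_indicator.
    pose proof (Nat.mod_upper_bound e (S phi) ltac:(lia)).
    destruct (Nat.leb_spec (e mod S phi) phi); [| lia]. unfold Rdiv. ring.
  - intros t Ht. rewrite act_ORR, (Nat.mod_small t) by lia. reflexivity.
Qed.

Theorem theorem3 (n phi : nat) (w : nat -> R) :
  (0 < n)%nat -> (phi <= n - 1)%nat ->
  (forall j, (j < n)%nat -> 0 < w j) ->
  deadline_optimal n phi w (ORR phi) /\
  tau_star_is n (ORR phi) w (Some (n + phi)%nat) /\
  (forall e, (e < n)%nat -> rate (ORR phi) e = 1 / INR (phi + 1)).
Proof.
  intros Hn Hphi Hw.
  pose proof (ORR_tau_star n phi w Hn Hphi Hw) as Htau.
  split; [| split; [exact Htau | intros e _; apply ORR_rate]].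
  split; [apply ORR_admissible | split; [apply ORR_cyclic |]].
  intros p' L L' Hint' Hcyc' HL HL'.
  rewrite (tau_star_unique n (ORR phi) w (n + phi) L Htau HL).
  exact (tau_star_lower_bound n phi p' w L' Hn Hphi Hint' Hcyc' HL').
Qed.
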